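(* Let $n\ge 6$ be an integer and $k$ an integer with $(n+1)/2\le k\le n-3$. If $\gcd(n,k)=\gcd(n,k+1)=1$, then $\mathsf{BO}(k,\mathbb{Z}/n\mathbb{Z})=k+1$.
   Context: For a positive integer $k$, a set $\{g_1,\dots,g_k\}$ of $k$ distinct elements of a finite abelian group $G$ (written additively) is called $k$-barycentric if $\sum_{i=1}^k g_i = k\,g_j$ for some $1\le j\le k$. The $k$-th barycentric Olson constant $\mathsf{BO}(k,G)$ is the smallest integer $\ell$ such that every subset $A\subseteq G$ with $|A|\ge \ell$ contains a $k$-barycentric subset (so that always $\mathsf{BO}(k,G)\le |G|+1$). *)

From HB Require Import structures.
From mathcomp Require Import all_boot all_order all_algebra.
Set Implicit Arguments. Unset Strict Implicit. Unset Printing Implicit Defensive.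
Import GRing.Theory.

Definition barycentric (G : finZmodType) (k : nat) (B : {set G}) : bool :=
  (#|B| == k) && [exists j in B, (\sum_(g in B) g)%R == (j *+ k)%R].

Definition BO_prop (G : finZmodType) (k l : nat) : bool :=
  [forall A : {set G}, (l <= #|A|) ==> [exists B : {set G}, (B \subset A) && barycentric k B]].

(* BO(k,G): the smallest l with BO_prop; l = #|G|+1 always works (vacuously),
   so the search over 0..#|G|+1 always succeeds. *)
Definition BO (G : finZmodType) (k : nat) : nat :=
  find (BO_prop G k) (iota 0 (#|G|).+2).

Lemma BO_prop_top (G : finZmodType) (k : nat) : BO_prop G k (#|G|).+1.
Proof.
apply/forallP=> A; apply/implyP=> H.
by move: (max_card A); rewrite leqNgt H.
Qed.

From mathcomp Require Import all_boot all_order all_algebra.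
From mathcomp Require Import zify.
Set Implicit Arguments. Unset Strict Implicit. Unset Printing Implicit Defensive.
Import GRing.Theory.

(* Both bounds hold in any finite abelian group G in which multiplication by k
   and by k+1 is injective ("k- and (k+1)-torsion free"):
   - upper bound, when |G| <= 2k: a (k+1)-set C with sum s contains b != y with
     y = s - k b (the map b |-> s - k b is injective with at most one fixed
     point, so its image of C minus that point must meet C by counting); then
     C \ {y} sums to k b with b in C \ {y}, i.e. it is k-barycentric;
   - lower bound: a k-set A not containing 0 with sum 0 has no k-barycentric
     subset, since A itself would give k g = 0 for some g in A.
   For G = Z/nZ, torsion freeness is coprimality, the gcd hypotheses force n
   odd, and for odd n such a zero-sum k-set of nonzero residues is built from
   pairs {i, n - i} (plus the triple {1, 2, n - 3} when k is odd).  The value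
   of BO then follows since it is a first index in an increasing property. *)

Local Open Scope ring_scope.

Definition ktorsion_free (G : zmodType) (k : nat) : Prop :=
  forall x : G, x *+ k = 0 -> x = 0.

Lemma mulrn_inj (G : zmodType) (k : nat) :
  ktorsion_free G k -> injective (fun x : G => x *+ k).
Proof.
move=> tfree x y /= /eqP; rewrite -subr_eq0 -mulrnBl => /eqP /tfree /eqP.
by rewrite subr_eq0 => /eqP.
Qed.

Lemma subset_of_card (T : finType) (A : {set T}) (m : nat) :
  (m <= #|A|)%N -> exists2 C : {set T}, C \subset A & #|C| = m.
Proof.
move=> le_mA; exists [set x in take m (enum A)].
  by apply/subsetP => x; rewrite inE => /mem_take; rewrite mem_enum.
rewrite cardsE; move/card_uniqP: (take_uniq m (enum_uniq (mem A))) => ->.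
by rewrite size_takel // -cardE.
Qed.

Section BarycentricOlson.

Variable G : finZmodType.

Lemma BO_prop_monotone (k l l' : nat) :
  (l <= l')%N -> BO_prop G k l -> BO_prop G k l'.
Proof.
move=> le_ll' /forallP BOl; apply/forallP => A; apply/implyP => le_l'A.
by apply: (implyP (BOl A)); apply: leq_trans le_l'A.
Qed.

Lemma zero_sum_set_not_BO_prop (k : nat) (A : {set G}) :
  ktorsion_free G k -> #|A| = k -> 0 \notin A -> \sum_(g in A) g = 0 ->
  ~~ BO_prop G k k.
Proof.
move=> tfree cardA A0 sumA0; apply/forallPn; exists A; rewrite cardA leqnn /=.
apply/existsPn => B; apply/negP => /andP [sBA /andP [/eqP cardB /existsP [j]]].
have -> : B = A by apply/eqP; rewrite eqEcard sBA cardA cardB /=.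
rewrite sumA0 => /andP [jA /eqP /esym /tfree j0].
by move: A0; rewrite -j0 jA.
Qed.

Lemma shifted_pair_in (k : nat) (C : {set G}) :
  ktorsion_free G k -> ktorsion_free G k.+1 -> (#|G| <= k.*2)%N -> #|C| = k.+1 ->
  exists b y, [/\ b \in C, y \in C, b != y & \sum_(g in C) g - b *+ k = y].
Proof.
move=> tfree tfree1 le_G_2k cardC.
set s := \sum_(g in C) g; pose f b := s - b *+ k.
have f_inj : injective f by move=> a b /addrI /oppr_inj /(mulrn_inj tfree).
pose F := [set b | f b == b].
have card_F : (#|F| <= 1)%N.
  apply/card_le1_eqP => x y; rewrite !inE /f => /eqP fx /eqP fy.
  apply: (mulrn_inj tfree1); rewrite /= !mulrS.
  by rewrite -{1}fx -{1}fy !subrK.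
have card_CF : (k <= #|C :\: F|)%N.
  have := leq_trans (subset_leq_card (subsetIr C F)) card_F.
  by rewrite cardsD cardC; lia.
have : (0 < #|f @: (C :\: F) :&: C|)%N.
  have := cardsUI (f @: (C :\: F)) C; rewrite card_imset // cardC.
  have : (#|f @: (C :\: F) :|: C| <= #|G|)%N := max_card _.
  (* the two occurrences of #|C :\: F| differ syntactically; identify them *)
  rewrite -addnn in le_G_2k; move: card_CF; move: #|C :\: F|; lia.
rewrite card_gt0 => /set0Pn [y]; rewrite inE => /andP [/imsetP [b]].
rewrite !inE => /andP [fbb bC] -> fbC.
by exists b, (f b); split; rewrite // eq_sym.
Qed.

(* Upper bound: if |G| <= 2k, every set of size >= k+1 has a k-barycentric
   subset, namely C \ {y} for a (k+1)-subset C and y as above. *)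
Lemma BO_prop_succ (k : nat) :
  ktorsion_free G k -> ktorsion_free G k.+1 -> (#|G| <= k.*2)%N ->
  BO_prop G k k.+1.
Proof.
move=> tfree tfree1 le_G_2k; apply/forallP => A; apply/implyP => le_kA.
have [C sCA cardC] := subset_of_card le_kA.
have [b [y [bC yC b_neq_y sum_y]]] := shifted_pair_in tfree tfree1 le_G_2k cardC.
apply/existsP; exists (C :\ y); rewrite (subset_trans (subD1set C y)) //=.
apply/andP; split.
  by apply/eqP; have := cardsD1 y C; rewrite yC cardC; lia.
apply/existsP; exists b; rewrite !inE b_neq_y bC /=.
by apply/eqP/(addrI y); rewrite -big_setD1 // -sum_y subrK.
Qed.

Lemma BO_eq_succ (k : nat) :
  (k <= #|G|)%N -> BO_prop G k k.+1 -> ~~ BO_prop G k k -> BO G k = k.+1.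
Proof.
move=> le_kG BO_k1 not_BO_k.
rewrite /BO (_ : (#|G|).+2 = k.+1 + (#|G| - k).+1)%N; last by lia.
rewrite iotaD find_cat add0n.
have -> : has (BO_prop G k) (iota 0 k.+1) = false.
  apply/hasPn => i; rewrite mem_iota => /andP [_ lt_ik].
  by apply: contra not_BO_k; apply: BO_prop_monotone.
by rewrite size_iota /= BO_k1 addn0.
Qed.

End BarycentricOlson.

Lemma Zp_ktorsion_free (n k : nat) :
  (1 < n)%N -> coprime n k -> ktorsion_free 'Z_n k.
Proof.
move=> n_gt1 cnk x xk0; apply: val_inj => /=.
have x_lt_n : (x < n)%N by case: x {xk0} => i; rewrite /= Zp_cast.
have : (n %| x * k)%N.
  by apply/eqP; move/(congr1 val): xk0; rewrite -[in LHS](natr_Zp x) -mulrnA /= val_Zp_nat.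
rewrite Gauss_dvdl // => /dvdn_leq; case: (val x) x_lt_n => // i; lia.
Qed.

Lemma Zp_zero_sum_set (n : nat) (t : seq nat) :
  (1 < n)%N -> uniq t -> all (fun i => 0 < i < n)%N t -> (n %| sumn t)%N ->
  exists A : {set 'Z_n}, [/\ #|A| = size t, 0 \notin A & \sum_(g in A) g = 0].
Proof.
move=> n_gt1 t_uniq t_range t_sum; pose s := [seq i%:R : 'Z_n | i <- t].
have val_nat i : (0 < i < n)%N -> val (i%:R : 'Z_n) = i.
  by move=> i_range; rewrite /= val_Zp_nat // modn_small //; lia.
have s_uniq : uniq s.
  rewrite map_inj_in_uniq // => i j /(allP t_range) i_range /(allP t_range) j_range.
  by move=> /(congr1 val); rewrite !val_nat.
exists [set x in s]; split.
- by rewrite cardsE (card_uniqP s_uniq) size_map.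
- rewrite inE; apply/mapP => -[i /(allP t_range) i_range /(congr1 val)].
  by rewrite val_nat //=; lia.
- rewrite (eq_bigl (mem s)) => [|x]; last by rewrite inE.
  rewrite -big_uniq // big_map -natr_sum -sumnE.
  by apply: val_inj; rewrite /= val_Zp_nat // (eqP t_sum).
Qed.

Local Close Scope ring_scope.

(* One of k, k+1 is even, so n coprime to both is odd. *)
Lemma odd_of_coprime_consecutive (n k : nat) :
  coprime n k -> coprime n k.+1 -> odd n.
Proof.
move=> cnk cnk1; rewrite -coprimen2.
apply: (@coprime_dvdr _ (k * k.+1)); first by rewrite dvdn2 oddM /= andbN.
by rewrite coprimeMr cnk cnk1.
Qed.

(* Summing two intervals of length c elementwise in opposite order. *)
Lemma sumn_iota_pair (a b c : nat) :
  sumn (iota a c) + sumn (iota b c) + c = c * (a + b + c).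
Proof. by elim: c a b => [|c IHc] a b //=; have := IHc a.+1 b.+1; lia. Qed.

(* Even size 2h: the h pairs {i, n - i} for 1 <= i <= h. *)
Lemma paired_zero_sum_seq (n h : nat) :
  h.*2 < n ->
  exists t : seq nat, [/\ uniq t, all (fun i => 0 < i < n) t, n %| sumn t & size t = h.*2].
Proof.
move=> lt_2h_n; exists (iota 1 h ++ iota (n - h) h); split.
- rewrite cat_uniq !iota_uniq /= andbT.
  by apply/hasPn => x; rewrite !mem_iota; lia.
- by rewrite all_cat; apply/andP; split; apply/allP => x; rewrite mem_iota; lia.
- have := sumn_iota_pair 1 (n - h) h.
  by rewrite sumn_cat => sum_t; apply/dvdnP; exists h; lia.
- by rewrite size_cat !size_iota; lia.
Qed.

(* Odd size 2h + 1: the triple {1, 2, n - 3} together with the h - 1 pairs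
   {i, n - i} for 4 <= i <= h + 2. *)
Lemma triple_paired_zero_sum_seq (n h : nat) :
  0 < h -> h.*2 + 5 <= n ->
  exists t : seq nat, [/\ uniq t, all (fun i => 0 < i < n) t, n %| sumn t & size t = h.*2.+1].
Proof.
move=> h_gt0 le_2h5_n.
exists ([:: 1; 2; n - 3] ++ iota 4 h.-1 ++ iota (n - h - 2) h.-1); split.
- rewrite !cat_uniq !iota_uniq has_cat /= !inE !andbT.
  apply/and3P; split; [lia | rewrite negb_or; apply/andP; split |].
  + by apply/hasPn => x; rewrite mem_iota !inE; lia.
  + by apply/hasPn => x; rewrite mem_iota !inE; lia.
  + by apply/hasPn => x; rewrite !mem_iota; lia.
- rewrite !all_cat /= andbT; apply/and3P; split; first lia;
    by apply/allP => x; rewrite mem_iota; lia.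
- have := sumn_iota_pair 4 (n - h - 2) h.-1.
  by rewrite !sumn_cat /= => sum_t; apply/dvdnP; exists h; nia.
- by rewrite !size_cat !size_iota /=; lia.
Qed.

Lemma zero_sum_seq (n k : nat) :
  6 <= n -> n.+1 <= k.*2 -> k <= n - 3 -> odd n ->
  exists t : seq nat, [/\ uniq t, all (fun i => 0 < i < n) t, n %| sumn t & size t = k].
Proof.
move=> le6n le_n1_2k le_k_n3 odd_n; rewrite -[k]odd_double_half in le_n1_2k le_k_n3 *.
set h := k./2; case: (odd k) le_n1_2k le_k_n3 => /= le_n1_2k le_k_n3.
- apply: triple_paired_zero_sum_seq; first lia.
  have : n != h.*2.+4 by apply: contraTneq odd_n => ->; rewrite /= odd_double.
  lia.
- by apply: paired_zero_sum_seq; lia.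
Qed.

Theorem mainTheorem5 (n k : nat) :
  6 <= n -> n.+1 <= k.*2 -> k <= n - 3 ->
  gcdn n k = 1 -> gcdn n k.+1 = 1 ->
  BO ('Z_n)%type k = k.+1.
Proof.
move=> le6n le_n1_2k le_k_n3 gnk gnk1.
have n_gt1 : 1 < n by lia.
have cnk : coprime n k by rewrite /coprime gnk.
have cnk1 : coprime n k.+1 by rewrite /coprime gnk1.
have card_Zn : #|'Z_n| = n by rewrite card_ord Zp_cast.
have [t [t_uniq t_range t_sum t_size]] :=
  zero_sum_seq le6n le_n1_2k le_k_n3 (odd_of_coprime_consecutive cnk cnk1).
have [A [cardA A0 sumA]] := Zp_zero_sum_set n_gt1 t_uniq t_range t_sum.
apply: BO_eq_succ.
- by rewrite card_Zn; lia.
- by apply: BO_prop_succ; rewrite ?card_Zn; try apply: Zp_ktorsion_free; lia.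
- by apply: (zero_sum_set_not_BO_prop (Zp_ktorsion_free n_gt1 cnk) _ A0 sumA); rewrite cardA.
Qed.
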